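(* Let $(\mathcal{C},\mathbb{E},\mathfrak{s})$ satisfy (ET1), (ET2) and (ET3), and let $\mathbb{F}\subseteq\mathbb{E}$ be an additive subfunctor. If an $\mathbb{F}$-inflation $x:A\to B$ factors through an $\mathbb{E}$-inflation $g:A\to Y$ (i.e. $x=hg$ for some $h:Y\to B$), then $g$ is an $\mathbb{F}$-inflation.
   Context: $\mathcal{C}$ additive, $\mathbb{E}:\mathcal{C}^{\mathrm{op}}\times\mathcal{C}\to\mathrm{Ab}$ biadditive (ET1); for $\delta\in\mathbb{E}(C,A)$, $a:A\to A'$, $c:C'\to C$ put $a_\star\delta=\mathbb{E}(C,a)(\delta)$, $c^\star\delta=\mathbb{E}(c,A)(\delta)$. (ET2): $\mathfrak{s}$ is an additive realization (Nakaoka–Palu): each $\delta\in\mathbb{E}(C,A)$ is assigned an equivalence class of sequences $A\xrightarrow{x}B\xrightarrow{y}C$ (up to isomorphism of middle terms compatible with the maps), $0$ is realized by split sequences, realization respects direct sums, and if $a_\star\delta=c^\star\delta'$ there is $b$ making the realizing sequences commute. A realized pair is an $\mathbb{E}$-triangle $A\xrightarrow{x}B\xrightarrow{y}C\overset{\delta}{\dashrightarrow}$; $x$ is an $\mathbb{E}$-inflation. A triple $(a,b,c)$ of morphisms forming a commutative diagram between realizing sequences with $a_\star\delta=c^\star\delta'$ is a morphism of $\mathbb{E}$-triangles. (ET3): given $\mathbb{E}$-triangles $A\xrightarrow{x}B\to C\overset{\delta}{\dashrightarrow}$, $A'\xrightarrow{x'}B'\to C'\overset{\delta'}{\dashrightarrow}$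 and $a:A\to A'$, $b:B\to B'$ with $bx=x'a$, there is $c:C\to C'$ such that $(a,b,c)$ is a morphism of $\mathbb{E}$-triangles. An additive subfunctor $\mathbb{F}\subseteq\mathbb{E}$: subgroups $\mathbb{F}(C,A)\subseteq\mathbb{E}(C,A)$ stable under $a_\star$, $c^\star$. An $\mathbb{F}$-triangle is an $\mathbb{E}$-triangle whose extension lies in $\mathbb{F}$; an $\mathbb{F}$-inflation is the first morphism of an $\mathbb{F}$-triangle. *)

From HB Require Import structures.
From mathcomp Require Import all_boot all_algebra.
Set Implicit Arguments.
Unset Strict Implicit.
Unset Printing Implicit Defensive.
Import GRing.Theory.
Local Open Scope ring_scope.

Record PreaddCat := {
  Obj : Type;
  Mor : Obj -> Obj -> zmodType;
  mcomp : forall X Y Z : Obj, Mor Y Z -> Mor X Y -> Mor X Z;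
  idm : forall X : Obj, Mor X X;
  compA : forall X Y Z W (f : Mor Z W) (g : Mor Y Z) (h : Mor X Y),
      mcomp f (mcomp g h) = mcomp (mcomp f g) h;
  comp1m : forall X Y (f : Mor X Y), mcomp (idm Y) f = f;
  compm1 : forall X Y (f : Mor X Y), mcomp f (idm X) = f;
  compDl : forall X Y Z (f f' : Mor Y Z) (g : Mor X Y),
      mcomp (f + f') g = mcomp f g + mcomp f' g;
  compDr : forall X Y Z (f : Mor Y Z) (g g' : Mor X Y),
      mcomp f (g + g') = mcomp f g + mcomp f g'
}.
Arguments Mor : clear implicits.
Arguments mcomp {p X Y Z} _ _.
Arguments idm {p} X.

Definition is_zero_obj (K : PreaddCat) (Z : Obj K) : Prop :=
  idm Z = (0 : Mor K Z Z).

Definition is_biprod (K : PreaddCat) (X1 X2 S : Obj K)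
  (i1 : Mor K X1 S) (i2 : Mor K X2 S) (p1 : Mor K S X1) (p2 : Mor K S X2) : Prop :=
  [/\ mcomp p1 i1 = idm X1, mcomp p2 i2 = idm X2,
      mcomp p1 i2 = 0, mcomp p2 i1 = 0
    & mcomp i1 p1 + mcomp i2 p2 = idm S].

Record AddCat := {
  pre :> PreaddCat;
  zero_obj_ex : exists Z : Obj pre, is_zero_obj Z;
  biprod_ex : forall X1 X2 : Obj pre, exists (S : Obj pre)
      (i1 : Mor pre X1 S) (i2 : Mor pre X2 S) (p1 : Mor pre S X1) (p2 : Mor pre S X2),
      is_biprod i1 i2 p1 p2
}.

Definition is_iso (K : PreaddCat) (X Y : Obj K) (f : Mor K X Y) : Prop :=
  exists g : Mor K Y X, mcomp g f = idm X /\ mcomp f g = idm Y.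

(* [Ext Z X] is E(Z,X);  [push a d] = a_* d;  [pull c d] = c^* d.       *)
Record BiaddFun (K : AddCat) := {
  Ext : Obj K -> Obj K -> zmodType;
  push : forall Z X X', Mor K X X' -> Ext Z X -> Ext Z X';
  pull : forall Z' Z X, Mor K Z' Z -> Ext Z X -> Ext Z' X;
  push_add : forall Z X X' (a : Mor K X X') (d d' : Ext Z X),
      push a (d + d') = push a d + push a d';
  pull_add : forall Z' Z X (c : Mor K Z' Z) (d d' : Ext Z X),
      pull c (d + d') = pull c d + pull c d';
  push_addm : forall Z X X' (a a' : Mor K X X') (d : Ext Z X),
      push (a + a') d = push a d + push a' d;
  pull_addm : forall Z' Z X (c c' : Mor K Z' Z) (d : Ext Z X),
      pull (c + c') d = pull c d + pull c' d;
  push_id : forall Z X (d : Ext Z X), push (idm X) d = d;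
  pull_id : forall Z X (d : Ext Z X), pull (idm Z) d = d;
  push_comp : forall Z X X' X'' (a : Mor K X X') (a' : Mor K X' X'') (d : Ext Z X),
      push (mcomp a' a) d = push a' (push a d);
  pull_comp : forall Z'' Z' Z X (c : Mor K Z' Z) (c' : Mor K Z'' Z') (d : Ext Z X),
      pull (mcomp c c') d = pull c' (pull c d);
  push_pull : forall Z' Z X X' (a : Mor K X X') (c : Mor K Z' Z) (d : Ext Z X),
      push a (pull c d) = pull c (push a d)
}.
Arguments Ext {K} b Z X.
Arguments push {K b Z X X'} a d.
Arguments pull {K b Z' Z X} c d.

(* Realizations: [s Z X d Y x y] means that the sequence               *)
(*   X --x--> Y --y--> Z  realizes d in E(Z,X).                          *)
Definition realization (K : AddCat) (E : BiaddFun K) :=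
  forall (Z X : Obj K), Ext E Z X -> forall Y : Obj K, Mor K X Y -> Mor K Y Z -> Prop.

Definition equiv_seq (K : AddCat) (X Y Y' Z : Obj K)
  (x : Mor K X Y) (y : Mor K Y Z) (x' : Mor K X Y') (y' : Mor K Y' Z) : Prop :=
  exists b : Mor K Y Y', [/\ is_iso b, mcomp b x = x' & mcomp y' b = y].

Record additive_realization (K : AddCat) (E : BiaddFun K) (s : realization E) : Prop := {
  real_ex : forall Z X (d : Ext E Z X), exists Y (x : Mor K X Y) (y : Mor K Y Z), s Z X d Y x y;
  real_equiv : forall Z X (d : Ext E Z X) Y x y Y' x' y',
      s Z X d Y x y -> s Z X d Y' x' y' -> @equiv_seq K X Y Y' Z x y x' y';
  real_closed : forall Z X (d : Ext E Z X) Y x y Y' x' y',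
      s Z X d Y x y -> @equiv_seq K X Y Y' Z x y x' y' -> s Z X d Y' x' y';
  real_zero : forall X Z S (i1 : Mor K X S) (i2 : Mor K Z S) p1 p2,
      is_biprod i1 i2 p1 p2 -> s Z X 0 S i1 p2;
  real_sum : forall X X' Y Y' Z Z' (d : Ext E Z X) (d' : Ext E Z' X')
      (x : Mor K X Y) (y : Mor K Y Z) (x' : Mor K X' Y') (y' : Mor K Y' Z')
      SX (iX : Mor K X SX) (iX' : Mor K X' SX) pX pX'
      SY (iY : Mor K Y SY) (iY' : Mor K Y' SY) pY pY'
      SZ (iZ : Mor K Z SZ) (iZ' : Mor K Z' SZ) pZ pZ',
      s Z X d Y x y -> s Z' X' d' Y' x' y' ->
      is_biprod iX iX' pX pX' -> is_biprod iY iY' pY pY' -> is_biprod iZ iZ' pZ pZ' ->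
      s SZ SX (push iX (pull pZ d) + push iX' (pull pZ' d')) SY
        (mcomp iY (mcomp x pX) + mcomp iY' (mcomp x' pX'))
        (mcomp iZ (mcomp y pY) + mcomp iZ' (mcomp y' pY'));
  real_morph : forall X Z X' Z' (d : Ext E Z X) (d' : Ext E Z' X')
      (a : Mor K X X') (c : Mor K Z Z') Y x y Y' x' y',
      s Z X d Y x y -> s Z' X' d' Y' x' y' -> push a d = pull c d' ->
      exists b : Mor K Y Y', mcomp b x = mcomp x' a /\ mcomp y' b = mcomp c y
}.

Definition ET3 (K : AddCat) (E : BiaddFun K) (s : realization E) : Prop :=
  forall X Z X' Z' (d : Ext E Z X) (d' : Ext E Z' X') Y (x : Mor K X Y) (y : Mor K Y Z)
    Y' (x' : Mor K X' Y') (y' : Mor K Y' Z') (a : Mor K X X') (b : Mor K Y Y'),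
    s Z X d Y x y -> s Z' X' d' Y' x' y' -> mcomp b x = mcomp x' a ->
    exists c : Mor K Z Z', mcomp c y = mcomp y' b /\ push a d = pull c d'.

Record add_subfunctor (K : AddCat) (E : BiaddFun K) := {
  sub : forall Z X, Ext E Z X -> Prop;
  sub0 : forall Z X, sub (0 : Ext E Z X);
  subD : forall Z X (d d' : Ext E Z X), sub d -> sub d' -> sub (d + d');
  subN : forall Z X (d : Ext E Z X), sub d -> sub (- d);
  sub_push : forall Z X X' (a : Mor K X X') (d : Ext E Z X), sub d -> sub (push a d);
  sub_pull : forall Z' Z X (c : Mor K Z' Z) (d : Ext E Z X), sub d -> sub (pull c d)
}.
Arguments sub {K E} a0 {Z X} _.

Definition E_inflation (K : AddCat) (E : BiaddFun K) (s : realization E)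
  (X Y : Obj K) (x : Mor K X Y) : Prop :=
  exists (Z : Obj K) (y : Mor K Y Z) (d : Ext E Z X), s Z X d Y x y.

Definition F_inflation (K : AddCat) (E : BiaddFun K) (s : realization E)
  (F : add_subfunctor E) (X Y : Obj K) (x : Mor K X Y) : Prop :=
  exists (Z : Obj K) (y : Mor K Y Z) (d : Ext E Z X), sub F d /\ s Z X d Y x y.

(* Applying (ET3) to the E-triangle of g, the F-triangle of x, the identity of
   A and h : Y -> B gives c with e = c^* d, where e and d are the extensions of
   the two triangles; F is stable under pullback, so e lies in F.  Only (ET3)
   is used, not (ET2). *)
From mathcomp Require Import all_boot all_algebra.

Section FactorThroughInflation.

Context {K : AddCat} {E : BiaddFun K} {s : realization E}.
Hypothesis HET3 : ET3 s.

Lemma ET3_pull_of_factorization {A B Y Z C : Obj K}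
    {g : Mor K A Y} {z : Mor K Y Z} {e : Ext E Z A}
    {x : Mor K A B} {y : Mor K B C} {d : Ext E C A} {h : Mor K Y B} :
  s Z A e Y g z -> s C A d B x y -> x = mcomp h g ->
  exists c : Mor K Z C, e = pull c d.
Proof.
move=> se sd x_hg.
have hg_x : mcomp h g = mcomp x (idm A) by rewrite compm1 x_hg.
have [c [_ e_cd]] := HET3 _ _ _ _ _ _ _ _ _ _ _ _ _ _ se sd hg_x.
by exists c; rewrite -e_cd push_id.
Qed.

End FactorThroughInflation.

Theorem lemma3p11 (K : AddCat) (E : BiaddFun K) (s : realization E)
  (ET2 : additive_realization s) (HET3 : ET3 s) (F : add_subfunctor E)
  (A B Y : Obj K) (x : Mor K A B) (g : Mor K A Y) (h : Mor K Y B) :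
  F_inflation s F x -> E_inflation s g -> x = mcomp h g -> F_inflation s F g.
Proof.
move=> [C [y [d [Fd sd]]]] [Z [z [e se]]] x_hg.
have [c e_cd] := ET3_pull_of_factorization HET3 se sd x_hg.
exists Z, z, e; split=> //.
by rewrite e_cd; apply: sub_pull.
Qed.
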